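(* Let $\hat{\mathbb{N}}$ be the set of odd integers $n\ge3$, and let $X,Y \subseteq \hat{\mathbb{N}}$ be non-empty. Then $\bigcap_{n \in X} \mathrm{pPol}\, R^{0,2}_n = \bigcap_{m \in Y} \mathrm{pPol}\, R^{0,2}_m$ if and only if $X = Y$.
   Context: Partial functions are on $\{0,1\}$: an $n$-ary partial function is a map $f:\operatorname{dom} f\to\{0,1\}$ with $\operatorname{dom} f\subseteq\{0,1\}^n$. For $\rho\subseteq\{0,1\}^h$, $\mathrm{pPol}\,\rho$ is the set of partial functions $f$ such that for every $h\times n$ matrix whose rows lie in $\operatorname{dom} f$ and whose columns lie in $\rho$, the column obtained by applying $f$ row-wise lies in $\rho$. Let $\rho_{0,2}=\{(0,0),(0,1),(1,0)\}$. For $n\ge2$, $R^{0,2}_{C,n}=\{(x_1,\dots,x_n)\in\{0,1\}^n: (x_i,x_{i+1})\in\rho_{0,2}\text{ for } i\in[n], \text{ with } x_{n+1}:=x_1\}$, $R^{0,2}_{K,n}=\{(x_1,\dots,x_n): (x_i,x_j)\in\rho_{0,2}\text{ for all } i\ne j\}$, and $R^{0,2}_n=R^{0,2}_{C,n}\times R^{0,2}_{K,n}\subseteq\{0,1\}^{2n}$. *)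

From mathcomp Require Import all_boot.
Set Implicit Arguments. Unset Strict Implicit. Unset Printing Implicit Defensive.

Definition bvec (n : nat) := {ffun 'I_n -> bool}.

(* An n-ary partial function on {0,1}: f x = Some b means x \in dom f and
   f x = b; f x = None means x \notin dom f. *)
Definition pfun (n : nat) := bvec n -> option bool.

Definition brel (h : nat) := bvec h -> Prop.

Definition pPol (h : nat) (rho : brel h) (n : nat) (f : pfun n) : Prop :=
  forall M : 'I_h -> bvec n,
    (forall i, f (M i) <> None) ->
    (forall j : 'I_n, rho [ffun i => M i j]) ->
    rho [ffun i => odflt false (f (M i))].

Definition rho02 (a b : bool) : Prop := ~~ (a && b).

Definition RC02 (n : nat) (x : 'I_n -> bool) : Prop :=
  forall i : 'I_n, rho02 (x i) (x (ordS i)).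

Definition RK02 (n : nat) (x : 'I_n -> bool) : Prop :=
  forall i j : 'I_n, i != j -> rho02 (x i) (x j).

(* R^{0,2}_n = R^{0,2}_{C,n} x R^{0,2}_{K,n} \subseteq {0,1}^{2n}:
   first n coordinates in R_C, last n coordinates in R_K. *)
Definition R02 (n : nat) : brel (n + n) :=
  fun x => RC02 (fun i => x (lshift n i)) /\ RK02 (fun i => x (rshift n i)).
Arguments pPol : clear implicits.
Arguments R02 : clear implicits.

From mathcomp Require Import all_boot zify.
From Stdlib Require Import Classical FunctionalExtensionality PropExtensionality.
Set Implicit Arguments. Unset Strict Implicit. Unset Printing Implicit Defensive.

(* Encode the vertices of a finite graph G as 0/1-vectors whose supports are
   disjoint exactly for adjacent vertices; a 0/1-colouring of G then yields a
   partial function that preserves R^{0,2}_m iff every homomorphism from the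
   disjoint union C_m + K_m into G is coloured inside R^{0,2}_m. Take for G the
   disjoint union K_n + C_n, coloured 1 exactly on C_n. For m = n the identity
   homomorphism is coloured badly. For odd m <> n nothing can reach C_n: it has
   no odd closed walk shorter than n and no triangle when n > 3, while K_m does
   not embed into G when m > n. So this function separates n from every other
   odd m, and the intersection of the clones pPol R^{0,2}_n determines X. *)

Section NonEdgeCode.

Variables (V : finType) (E : rel V).
Hypotheses (E_irr : irreflexive E) (E_sym : symmetric E).

Definition code_dim := #|{: V * V}|.

(* Coordinates are indexed by pairs of vertices; [code d] is the indicator of
   the non-edges incident to [d]. *)
Definition code (d : V) : bvec code_dim :=
  [ffun c => let p := enum_val c in ((p.1 == d) || (p.2 == d)) && ~~ E p.1 p.2].

Lemma code_disjointP d e : (forall c, ~~ (code d c && code e c)) <-> E d e.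
Proof.
split=> [disj_de | Ede c].
  apply/negPn/negP => nEde; have := disj_de (enum_rank (d, e)).
  by rewrite !ffunE enum_rankK /= !eqxx orbT nEde.
rewrite !ffunE; case: (enum_val c) => p1 p2 /=.
have ne_de : d != e by apply: contraTneq Ede => ->; rewrite E_irr.
apply/negP => /andP[/andP[d_in nE] /andP[e_in _]].
case/orP: d_in e_in => /eqP d_eq /orP[]/eqP e_eq; subst; rewrite ?eqxx // in ne_de.
  by case/negP: nE.
by rewrite E_sym in Ede; case/negP: nE.
Qed.

Lemma code_inj : injective code.
Proof.
move=> d e /(congr1 (fun x : bvec code_dim => x (enum_rank (d, d)))).
by rewrite !ffunE enum_rankK /= eqxx E_irr /= => /esym/andP[/orP[]/eqP].
Qed.

Definition R02_hom m (g : 'I_(m + m) -> V) : Prop :=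
  (forall i, E (g (lshift m i)) (g (lshift m (ordS i)))) /\
  (forall i j, i != j -> E (g (rshift m i)) (g (rshift m j))).

Lemma R02_codeP m (g : 'I_(m + m) -> V) :
  (forall c, R02 m [ffun r => code (g r) c]) <-> R02_hom g.
Proof.
split=> [cols | [cyc cli] c].
  split=> [i | i j ne_ij]; apply/code_disjointP => c; have [cyc_c cli_c] := cols c.
    by have := cyc_c i; rewrite /rho02 !ffunE.
  by have := cli_c i j ne_ij; rewrite /rho02 !ffunE.
split=> [i | i j ne_ij]; rewrite /rho02 !(ffunE (fun r => code (g r) c)).
  exact: (proj2 (code_disjointP _ _) (cyc i)).
exact: (proj2 (code_disjointP _ _) (cli i j ne_ij)).
Qed.

Variable colour : V -> bool.

Definition code_fun : pfun code_dim :=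
  fun x => if [pick d | code d == x] is Some d then Some (colour d) else None.

Lemma code_funE d : code_fun (code d) = Some (colour d).
Proof.
rewrite /code_fun; case: pickP => [e /eqP/code_inj -> // | /(_ d)].
by rewrite eqxx.
Qed.

Lemma code_fun_dom x : code_fun x <> None -> exists d, x = code d.
Proof. by rewrite /code_fun; case: pickP => [d /eqP <- _ | //]; exists d. Qed.

Lemma pPol_R02_codeP m :
  pPol (m + m) (R02 m) code_dim code_fun <->
  forall g : 'I_(m + m) -> V, R02_hom g -> R02 m [ffun r => colour (g r)].
Proof.
split=> [pol g hom | hom_R02 M dom cols].
  have -> : [ffun r => colour (g r)] = [ffun r => odflt false (code_fun (code (g r)))].
    by apply/ffunP => r; rewrite !ffunE code_funE.
  by apply: pol => [r | ]; [rewrite code_funE | apply/R02_codeP].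
have [g Mg] := fin_all_exists (fun r => code_fun_dom (dom r)).
have -> : [ffun r => odflt false (code_fun (M r))] = [ffun r => colour (g r)].
  by apply/ffunP => r; rewrite !ffunE Mg code_funE.
apply/hom_R02/R02_codeP => c.
suff -> : [ffun r => code (g r) c] = [ffun r => M r c] by [].
by apply/ffunP => r; rewrite !ffunE Mg !ffunE.
Qed.

End NonEdgeCode.

Lemma iter_ordS n (i : 'I_n) k : iter k (@ordS n) i = (i + k) %% n :> nat.
Proof.
elim: k => [|k IH]; first by rewrite addn0 modn_small.
by rewrite iterS /= IH -addn1 modnDml addn1 addnS.
Qed.

Lemma iter_ordS_neq n (i : 'I_n) k : 0 < k < n -> iter k (@ordS n) i != i.
Proof.
case/andP=> k_gt0 k_lt_n; apply: contraTneq k_gt0 => /(congr1 (@nat_of_ord n))/eqP.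
rewrite iter_ordS -[X in _ == X](modn_small (ltn_ord i)) -[X in _ == X %% _]addn0.
by rewrite eqn_modDl mod0n modn_small // => /eqP ->.
Qed.

Lemma ordS_neq n (j : 'I_n) : 1 < n -> ordS j != j.
Proof. by move=> n_gt1; apply: (@iter_ordS_neq n j 1). Qed.

Definition cycle_adj n : rel 'I_n := fun j l => (l == ordS j) || (j == ordS l).

Lemma cycle_closed_walk_even n L (w : nat -> 'I_n) :
  L < n -> (forall k, k < L -> cycle_adj (w k) (w k.+1)) -> w L = w 0 -> ~~ odd L.
Proof.
move=> L_lt_n adj_w wL.
(* [a] and [b] count forward and backward steps; a closed walk shorter than [n]
   forces [a = b]. *)
have winding K : K <= L -> exists a b, a + b = K /\ w 0 + a = w K + b %[mod n].
  elim: K => [|K IH KL]; first by exists 0, 0.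
  have [a [b [abK w_ab]]] := IH (ltnW KL).
  case/orP: (adj_w K KL) => /eqP wS.
    exists a.+1, b; split; first by rewrite addSn abK.
    rewrite wS /= modnDml !addnS addSn -[(w 0 + a).+1]addn1 -[(w K + b).+1]addn1.
    by rewrite -modnDml w_ab modnDml.
  exists a, b.+1; split; first by rewrite addnS abK.
  by rewrite w_ab wS /= modnDml addSn addnS.
have [a [b [abL]]] := winding L (leqnn L).
rewrite wL => /eqP; rewrite eqn_modDl !modn_small; [|lia|lia].
by move/eqP=> ab; rewrite -abL ab addnn odd_double.
Qed.

Definition KC n := ('I_n + 'I_n)%type.

Definition KC_edge n : rel (KC n) := fun d e =>
  match d, e with
  | inl i, inl i' => i != i'
  | inr j, inr l => cycle_adj j l
  | _, _ => false
  end.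

Definition on_cycle n (d : KC n) : bool := if d is inr _ then true else false.

Definition KC_base n (d : KC n) : 'I_n := match d with inl i | inr i => i end.

Section KCGraph.

Variable n : nat.
Hypothesis n_gt1 : 1 < n.

Lemma KC_edge_irr : irreflexive (@KC_edge n).
Proof. by case=> i /=; rewrite ?eqxx // /cycle_adj orbb eq_sym (negbTE (ordS_neq i n_gt1)). Qed.

Lemma KC_edge_sym : symmetric (@KC_edge n).
Proof. by case=> [i|j] [i'|l] //=; rewrite 1?eq_sym // /cycle_adj orbC. Qed.

Lemma KC_edge_on_cycle (d e : KC n) : KC_edge d e -> on_cycle d = on_cycle e.
Proof. by case: d; case: e. Qed.

Lemma KC_edge_base_neq (d e : KC n) : KC_edge d e -> KC_base d != KC_base e.
Proof.
case: d e => [i|j] [i'|l] //= /orP[]/eqP->; first by rewrite eq_sym ordS_neq.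
exact: ordS_neq.
Qed.

Lemma KC_closed_walk_off_cycle L (Z : nat -> KC n) :
  odd L -> L < n -> (forall k, k < L -> KC_edge (Z k) (Z k.+1)) -> Z L = Z 0 ->
  ~~ on_cycle (Z 0).
Proof.
move=> odd_L L_lt_n walk ZL; apply/negP => cyc0.
have cyc k : k <= L -> on_cycle (Z k).
  by elim: k => // k IH kL; rewrite -(KC_edge_on_cycle (walk k kL)) IH // ltnW.
have: ~~ odd L.
  apply: (@cycle_closed_walk_even n L (fun k => KC_base (Z k))) => [//|k kL|]; last by rewrite ZL.
  have := walk k kL; have := cyc k (ltnW kL).
  by case: (Z k) => // j _; case: (Z k.+1).
by rewrite odd_L.
Qed.

End KCGraph.

Lemma KC_R02_hom_R02 n m (g : 'I_(m + m) -> KC n) :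
  1 < n -> odd m -> 2 < m -> m != n ->
  R02_hom (@KC_edge n) g -> R02 m [ffun r => on_cycle (g r)].
Proof.
move=> n_gt1 odd_m m_gt2 m_neq_n [cyc cli].
have m_lt_n : m < n.
  rewrite ltn_neqAle m_neq_n /=.
  have base_inj : injective (fun i => KC_base (g (rshift m i))).
    by move=> i j /eqP; apply: contraTeq => /cli/(KC_edge_base_neq n_gt1).
  by have := leq_card _ base_inj; rewrite !card_ord.
have off_C i : ~~ on_cycle (g (lshift m i)).
  pose w k := g (lshift m (iter k (@ordS m) i)).
  apply: (@KC_closed_walk_off_cycle n m w odd_m m_lt_n (fun k _ => cyc _)).
  by congr (g (lshift m _)); apply/val_inj; rewrite /= iter_ordS modnDr modn_small.
have off_K i : ~~ on_cycle (g (rshift m i)).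
  pose t k := nth i [:: i; ordS i; ordS (ordS i)] k.
  apply: (@KC_closed_walk_off_cycle n 3 (fun k => g (rshift m (t k)))) => //.
    exact: leq_ltn_trans m_gt2 m_lt_n.
  case=> [|[|[|//]]] _; apply: cli; rewrite /t /=.
  - by rewrite eq_sym (ordS_neq _ (ltnW m_gt2)).
  - by rewrite eq_sym (ordS_neq _ (ltnW m_gt2)).
  - exact: (@iter_ordS_neq m i 2).
split=> [i | i j _]; rewrite /rho02 !ffunE.
  by rewrite (negbTE (off_C i)).
by rewrite (negbTE (off_K i)).
Qed.

Lemma KC_R02_hom_diag n :
  0 < n -> exists2 g : 'I_(n + n) -> KC n,
    R02_hom (@KC_edge n) g & ~ R02 n [ffun r => on_cycle (g r)].
Proof.
move=> n_gt0.
have split_l (i : 'I_n) : split (lshift n i) = inl i := unsplitK (inl i).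
have split_r (i : 'I_n) : split (rshift n i) = inr i := unsplitK (inr i).
exists (fun r => match split r with inl i => inr i | inr i => inl i end : KC n).
  split=> [i | i j ne_ij] /=; rewrite ?split_l ?split_r //=.
  by rewrite /cycle_adj eqxx.
case=> cyc _; have := cyc (Ordinal n_gt0).
by rewrite /rho02 !ffunE !split_l.
Qed.

Definition KC_fun n : pfun (code_dim (KC n)) := code_fun (@KC_edge n) (@on_cycle n).

Lemma pPol_R02_KC_fun n m :
  1 < n -> odd m -> 2 < m -> pPol (m + m) (R02 m) _ (@KC_fun n) <-> m != n.
Proof.
move=> n_gt1 odd_m m_gt2.
apply: (iff_trans (pPol_R02_codeP (KC_edge_irr n_gt1) (@KC_edge_sym n) _ _)).
split=> [hom_R02 | m_neq_n g]; last exact: KC_R02_hom_R02.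
apply/eqP => m_eq_n; subst m.
by have [g hom not_R02] := KC_R02_hom_diag (ltnW n_gt1); apply/not_R02/hom_R02.
Qed.

Lemma R02_meet_incl (A B : nat -> Prop) :
  (forall n, A n -> odd n /\ 3 <= n) -> (forall m, B m -> odd m /\ 3 <= m) ->
  (forall k (f : pfun k), (forall m, B m -> pPol (m + m) (R02 m) k f) ->
                          (forall n, A n -> pPol (n + n) (R02 n) k f)) ->
  forall n, A n -> B n.
Proof.
move=> A_odd B_odd meet_incl n An; apply: NNPP => not_Bn.
have [odd_n n_gt2] := A_odd n An.
suff : n != n by rewrite eqxx.
apply/(pPol_R02_KC_fun (ltnW n_gt2) odd_n n_gt2); apply: meet_incl An => m Bm.
have [odd_m m_gt2] := B_odd m Bm.
apply/(pPol_R02_KC_fun (ltnW n_gt2) odd_m m_gt2).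
by apply/eqP => m_eq_n; apply: not_Bn; rewrite -m_eq_n.
Qed.

Theorem mainTheorem17 (X Y : nat -> Prop) :
  (forall n, X n -> odd n /\ 3 <= n) ->
  (forall m, Y m -> odd m /\ 3 <= m) ->
  (exists n, X n) -> (exists m, Y m) ->
  ((forall (k : nat) (f : pfun k),
       (forall n, X n -> pPol (n + n) (R02 n) k f) <-> (forall m, Y m -> pPol (m + m) (R02 m) k f))
   <-> X = Y).
Proof.
move=> X_odd Y_odd _ _; split=> [same_meet | -> //].
apply: functional_extensionality => n; apply: propositional_extensionality.
by split; apply: R02_meet_incl => // k f; case: (same_meet k f).
Qed.
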